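(* Let $b\ge 1$ be an integer and let $a_1<a_2<\dots<a_l$ be integers such that $a_{i+1}-a_i\le b$ for all $1\le i<l$. Set $A=\{a_1,a_2,\dots,a_l\}$. Then for every integer $n>2b^2$, \[ nA=(n-2b^2)\{a_1,a_l\}+2b^2A. \]
   Context: For a subset $A$ of an abelian group and a positive integer $n$, $nA=A+A+\dots+A$ ($n$ summands) denotes the $n$-fold sumset $\{c_1+\dots+c_n : c_i\in A\}$ (repetitions allowed); sums of sets are Minkowski sums $X+Y=\{x+y: x\in X, y\in Y\}$. *)

From Stdlib Require Import ZArith List Lia.
Import ListNotations.
Open Scope Z_scope.

Definition sumset (n : nat) (A : Z -> Prop) : Z -> Prop :=
  fun x => exists s : list Z,
    length s = n /\ Forall A s /\ fold_right Z.add 0 s = x.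

Definition msum (X Y : Z -> Prop) : Z -> Prop :=
  fun x => exists y z, X y /\ Y z /\ x = y + z.

Definition setOf (a : list Z) : Z -> Prop := fun x => In x a.

From Stdlib Require Import ZArith List Lia Permutation Sorted Mergesort Orders.
Import ListNotations.
Open Scope Z_scope.

(* Rewrite a sum of n elements of A, keeping the number of summands and the total, until at
   most 2b^2 summands differ from a_1 and a_l.  The potential sum (x - a_1)(a_l - x) over the
   summands is nonnegative and vanishes exactly on the extremes.  If more than 2b^2 summands
   are interior, sort them: since consecutive elements of A are at most b apart, pigeonhole
   gives b of the lowest b^2 that can all move down by a common step g <= b, and b of the
   others that can all move up by a common step h <= b, staying in A.  Moving h low summands
   down by g and g high summands up by h keeps the total and strictly lowers the potential,
   so the process terminates. *)

Definition lsum : list Z -> Z := fold_right Z.add 0.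

Lemma lsum_cons x l : lsum (x :: l) = x + lsum l.
Proof. reflexivity. Qed.

Lemma lsum_app l1 l2 : lsum (l1 ++ l2) = lsum l1 + lsum l2.
Proof. induction l1 as [|x l1 IH]; cbn; lia. Qed.

Lemma lsum_perm l1 l2 : Permutation l1 l2 -> lsum l1 = lsum l2.
Proof. induction 1; cbn; lia. Qed.

Lemma lsum_map_add c l : lsum (map (fun x => x + c) l) = lsum l + c * Z.of_nat (length l).
Proof. induction l as [|x l IH]; cbn -[Z.of_nat]; rewrite ?Nat2Z.inj_succ; lia. Qed.

Lemma lsum_le_const t l : Forall (fun x => x <= t) l -> lsum l <= Z.of_nat (length l) * t.
Proof. induction 1; cbn -[Z.of_nat]; rewrite ?Nat2Z.inj_succ; lia. Qed.

Lemma lsum_ge_const t l : Forall (fun x => t <= x) l -> Z.of_nat (length l) * t <= lsum l.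
Proof. induction 1; cbn -[Z.of_nat]; rewrite ?Nat2Z.inj_succ; lia. Qed.

Definition potential (m M : Z) (l : list Z) : Z := lsum (map (fun x => (x - m) * (M - x)) l).

Lemma potential_cons m M x l : potential m M (x :: l) = (x - m) * (M - x) + potential m M l.
Proof. reflexivity. Qed.

Lemma potential_app m M l1 l2 : potential m M (l1 ++ l2) = potential m M l1 + potential m M l2.
Proof. unfold potential; rewrite map_app; apply lsum_app. Qed.

Lemma potential_perm m M l1 l2 : Permutation l1 l2 -> potential m M l1 = potential m M l2.
Proof. intro H; apply lsum_perm, Permutation_map, H. Qed.

Lemma potential_map_add m M c l :
  potential m M (map (fun x => x + c) l) =
  potential m M l + c * (M + m - c) * Z.of_nat (length l) - 2 * c * lsum l.
Proof.
  induction l as [|x l IH]; [cbn; ring|].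
  cbn [map length]; rewrite !potential_cons, lsum_cons, Nat2Z.inj_succ, IH; ring.
Qed.

Lemma potential_nonneg m M l : Forall (fun x => m <= x <= M) l -> 0 <= potential m M l.
Proof.
  induction 1 as [|x l Hx _ IH]; rewrite ?potential_cons; [easy|].
  assert (0 <= (x - m) * (M - x)) by nia; lia.
Qed.

Lemma potential_extremes m M l : Forall (fun x => x = m \/ x = M) l -> potential m M l = 0.
Proof. induction 1 as [|x l [-> | ->] _ IH]; rewrite ?potential_cons; [reflexivity | |]; lia. Qed.

Lemma partition_perm {A : Type} (P : A -> Prop) (P_dec : forall x, {P x} + {~ P x}) (l : list A) :
  exists l1 l2, Permutation l (l1 ++ l2) /\ Forall P l1 /\ Forall (fun x => ~ P x) l2.
Proof.
  induction l as [|x l (l1 & l2 & Hl & H1 & H2)]; [now exists [], []|].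
  destruct (P_dec x) as [Hx|Hx].
  - exists (x :: l1), l2; split; [now constructor | auto].
  - exists l1, (x :: l2); split; auto.
    now rewrite <- Permutation_middle; constructor.
Qed.

Lemma Forall_firstn {A : Type} (P : A -> Prop) n l : Forall P l -> Forall P (firstn n l).
Proof. rewrite <- (firstn_skipn n l) at 1; now intros [? _]%Forall_app. Qed.

Lemma StronglySorted_app_inv {A : Type} (R : A -> A -> Prop) l1 l2 :
  StronglySorted R (l1 ++ l2) ->
  StronglySorted R l2 /\ forall x y, In x l1 -> In y l2 -> R x y.
Proof.
  induction l1 as [|z l1 IH]; cbn; [easy|].
  intros [Hs Hz]%StronglySorted_inv.
  destruct (IH Hs) as [H2 H12]; split; [exact H2|].
  intros x y [<- | Hx] Hy; [|now apply H12].
  rewrite Forall_forall in Hz; apply Hz, in_or_app; auto.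
Qed.

Module ZLeBool <: TotalLeBool.
  Definition t := Z.
  Definition leb := Z.leb.
  Lemma leb_total x y : leb x y = true \/ leb y x = true.
  Proof. unfold leb; rewrite !Z.leb_le; lia. Qed.
End ZLeBool.

Module ZSort := Sort ZLeBool.

Lemma split_at_rank (k : nat) (w : list Z) : (k < length w)%nat ->
  exists t lo hi, Permutation w (lo ++ hi) /\ length lo = k /\
    Forall (fun x => x <= t) lo /\ Forall (fun y => t <= y) hi.
Proof.
  intro Hk.
  set (ws := ZSort.sort w).
  assert (Hperm : Permutation w ws) by apply ZSort.Permuted_sort.
  assert (Hsorted : StronglySorted (fun x y => is_true (x <=? y)) ws).
  { apply ZSort.StronglySorted_sort; intros x y z; unfold is_true; rewrite !Z.leb_le; lia. }
  assert (Hlen : length (firstn k ws) = k).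
  { rewrite length_firstn, <- (Permutation_length Hperm); lia. }
  rewrite <- (firstn_skipn k ws) in Hperm, Hsorted.
  destruct (skipn k ws) as [|t hi] eqn:Ehi.
  { rewrite app_nil_r in Hperm; apply Permutation_length in Hperm; lia. }
  apply StronglySorted_app_inv in Hsorted as [[_ Ht]%StronglySorted_inv Hlo].
  exists t, (firstn k ws), (t :: hi); repeat split; auto.
  - apply Forall_forall; intros x Hx; apply Z.leb_le, Hlo; cbn; auto.
  - constructor; [lia|].
    eapply Forall_impl; [|exact Ht]; intros y; apply Z.leb_le.
Qed.

Lemma pigeonhole_perm (R : Z -> Z -> Prop) (R_dec : forall x g, {R x g} + {~ R x g})
    (k c : nat) (l : list Z) :
  (forall x, In x l -> exists g, 1 <= g <= Z.of_nat c /\ R x g) ->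
  (c * k < length l)%nat ->
  exists g P rest, 1 <= g <= Z.of_nat c /\ Permutation l (P ++ rest) /\
    length P = S k /\ Forall (fun x => R x g) P.
Proof.
  revert l; induction c as [|c IH]; intros l Hcol Hlen.
  { destruct l as [|x l]; [cbn in Hlen; lia|].
    destruct (Hcol x (or_introl eq_refl)) as (g & Hg & _); lia. }
  set (top := Z.of_nat (S c)).
  destruct (partition_perm (fun x => R x top) (fun x => R_dec x top) l)
    as (l1 & l2 & Hl & H1 & H2).
  pose proof (Permutation_length Hl) as Hlen12; rewrite length_app in Hlen12.
  destruct (Nat.le_gt_cases (S k) (length l1)) as [Hbig | Hsmall].
  - exists top, (firstn (S k) l1), (skipn (S k) l1 ++ l2); split; [lia|]; split.
    { now rewrite app_assoc, firstn_skipn. }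
    split; [rewrite length_firstn; lia|].
    rewrite <- (firstn_skipn (S k) l1) in H1; now apply Forall_app in H1.
  - destruct (IH l2) as (g & P & rest & Hg & HP & HlP & HR).
    + intros x Hx.
      destruct (Hcol x) as (g & Hg & HR).
      { apply (Permutation_in x (Permutation_sym Hl)), in_or_app; auto. }
      exists g; split; [|exact HR].
      rewrite Forall_forall in H2.
      assert (g <> top) by (intros ->; exact (H2 x Hx HR)).
      unfold top in *; lia.
    + nia.
    + exists g, P, (l1 ++ rest); split; [lia|]; split; [|auto].
      rewrite Hl, HP, !app_assoc; apply Permutation_app_tail, Permutation_app_comm.
Qed.

Definition exchange (P Q : list Z) : list Z :=
  map (fun x => x - Z.of_nat (length Q)) P ++ map (fun y => y + Z.of_nat (length P)) Q.

Lemma map_sub_as_add (c : Z) (l : list Z) : map (fun x => x - c) l = map (fun x => x + - c) l.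
Proof. apply map_ext; intro; lia. Qed.

Lemma length_exchange P Q : length (exchange P Q) = length (P ++ Q).
Proof. unfold exchange; now rewrite !length_app, !length_map. Qed.

Lemma lsum_exchange P Q : lsum (exchange P Q) = lsum (P ++ Q).
Proof. unfold exchange; rewrite map_sub_as_add, !lsum_app, !lsum_map_add; ring. Qed.

Lemma potential_exchange_lt m M t P Q : P <> [] -> Q <> [] ->
  Forall (fun x => x <= t) P -> Forall (fun y => t <= y) Q ->
  potential m M (exchange P Q) < potential m M (P ++ Q).
Proof.
  intros HP HQ HPt HQt.
  unfold exchange; rewrite map_sub_as_add, !potential_app, !potential_map_add.
  apply lsum_le_const in HPt; apply lsum_ge_const in HQt.
  set (h := Z.of_nat (length P)) in *; set (g := Z.of_nat (length Q)) in *.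
  assert (0 < h) by (destruct P; [easy|cbn in h; lia]).
  assert (0 < g) by (destruct Q; [easy|cbn in g; lia]).
  assert (g * lsum P <= h * lsum Q) by nia.
  assert (0 < g * h * (g + h)) by (apply Z.mul_pos_pos; [apply Z.mul_pos_pos|]; lia).
  nia.
Qed.

Section Reduction.

Variables (a : list Z) (m M : Z) (b : nat).
Hypothesis b_pos : (1 <= b)%nat.
Hypothesis range : forall x, In x a -> m <= x <= M.
Hypothesis step_down : forall x, In x a -> m < x -> exists g, 1 <= g <= Z.of_nat b /\ In (x - g) a.
Hypothesis step_up : forall x, In x a -> x < M -> exists h, 1 <= h <= Z.of_nat b /\ In (x + h) a.

Definition interior (x : Z) : Prop := In x a /\ m < x < M.

Lemma exchange_step w : Forall interior w -> (2 * (b * b) < length w)%nat ->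
  exists w', Forall (fun x => In x a) w' /\ length w' = length w /\
    lsum w' = lsum w /\ potential m M w' < potential m M w.
Proof.
  intros Hw Hlen.
  destruct (split_at_rank (b * b) w) as (t & lo & hi & Hperm & Hlo & Hlo_t & Hhi_t); [lia|].
  pose proof (Permutation_length Hperm) as Hlen_split; rewrite length_app in Hlen_split.
  assert (Hinterior : forall x, In x (lo ++ hi) -> interior x).
  { intros x Hx; rewrite Forall_forall in Hw.
    apply Hw, (Permutation_in x (Permutation_sym Hperm)), Hx. }
  destruct (pigeonhole_perm (fun x g => In (x - g) a) (fun x g => in_dec Z.eq_dec (x - g) a)
              (b - 1) b lo) as (g & P & restP & Hg & HP & HlP & Pdown).
  { intros x Hx; destruct (Hinterior x) as [Ha Hx']; [apply in_or_app; auto|].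
    apply step_down; [exact Ha | lia]. }
  { nia. }
  destruct (pigeonhole_perm (fun x h => In (x + h) a) (fun x h => in_dec Z.eq_dec (x + h) a)
              (b - 1) b hi) as (h & Q & restQ & Hh & HQ & HlQ & Qup).
  { intros x Hx; destruct (Hinterior x) as [Ha Hx']; [apply in_or_app; auto|].
    apply step_up; [exact Ha | lia]. }
  { nia. }
  set (P1 := firstn (Z.to_nat h) P); set (Q1 := firstn (Z.to_nat g) Q).
  assert (HlP1 : Z.of_nat (length P1) = h) by (unfold P1; rewrite length_firstn; lia).
  assert (HlQ1 : Z.of_nat (length Q1) = g) by (unfold Q1; rewrite length_firstn; lia).
  set (rest := skipn (Z.to_nat h) P ++ restP ++ skipn (Z.to_nat g) Q ++ restQ).
  assert (Hw_split : Permutation w ((P1 ++ Q1) ++ rest)).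
  { rewrite Hperm, HP, HQ, <- (firstn_skipn (Z.to_nat h) P), <- (firstn_skipn (Z.to_nat g) Q).
    fold P1 Q1; unfold rest; rewrite <- !app_assoc.
    apply Permutation_app_head.
    now rewrite app_assoc, Permutation_app_swap_app, <- app_assoc. }
  exists (exchange P1 Q1 ++ rest); split; [|split; [|split]].
  - apply Forall_app; split.
    + unfold exchange; apply Forall_app; split; apply Forall_map.
      * rewrite HlQ1; now apply Forall_firstn.
      * rewrite HlP1; now apply Forall_firstn.
    + rewrite Hw_split in Hw; apply Forall_app in Hw as [_ Hrest].
      eapply Forall_impl; [|exact Hrest]; now intros x [Hx _].
  - rewrite (Permutation_length Hw_split), !length_app, length_exchange, length_app; lia.
  - now rewrite (lsum_perm _ _ Hw_split), !lsum_app, lsum_exchange, lsum_app.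
  - rewrite (potential_perm _ _ _ _ Hw_split), !(potential_app _ _ _ rest).
    apply Z.add_lt_mono_r, potential_exchange_lt with t.
    + intros E; rewrite E in HlP1; cbn in HlP1; lia.
    + intros E; rewrite E in HlQ1; cbn in HlQ1; lia.
    + apply Forall_firstn; rewrite HP in Hlo_t; now apply Forall_app in Hlo_t.
    + apply Forall_firstn; rewrite HQ in Hhi_t; now apply Forall_app in Hhi_t.
Qed.

Lemma extreme_dec x : {x = m \/ x = M} + {~ (x = m \/ x = M)}.
Proof.
  destruct (Z.eq_dec x m), (Z.eq_dec x M); [left; auto .. | right; intros [|]; auto].
Qed.

Lemma reduce_to_extremes w : Forall (fun x => In x a) w ->
  exists e r, Forall (fun x => x = m \/ x = M) e /\ Forall (fun x => In x a) r /\
    (length r <= 2 * (b * b))%nat /\ (length e + length r = length w)%nat /\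
    lsum e + lsum r = lsum w.
Proof.
  induction w as [w IH] using
    (well_founded_induction (well_founded_ltof _ (fun w => Z.to_nat (potential m M w)))).
  intros Hw.
  destruct (partition_perm _ extreme_dec w) as (e0 & w0 & Hsplit & He0 & Hw0).
  pose proof (Permutation_length Hsplit) as Hlen0; rewrite length_app in Hlen0.
  assert (Hw0_in : Forall (fun x => In x a) w0).
  { rewrite Hsplit in Hw; now apply Forall_app in Hw. }
  destruct (Nat.le_gt_cases (length w0) (2 * (b * b))) as [Hsmall | Hbig].
  { exists e0, w0; repeat split; auto.
    now rewrite (lsum_perm _ _ Hsplit), lsum_app. }
  assert (Hw0_int : Forall interior w0).
  { rewrite Forall_forall in Hw0, Hw0_in |- *; intros x Hx.
    specialize (range x (Hw0_in x Hx)); specialize (Hw0 x Hx).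
    split; [auto | lia]. }
  destruct (exchange_step w0 Hw0_int Hbig) as (w1 & Hw1 & Hlen1 & Hsum1 & Hpot1).
  assert (Hpot : potential m M w = potential m M w0).
  { now rewrite (potential_perm _ _ _ _ Hsplit), potential_app, potential_extremes. }
  assert (0 <= potential m M w1).
  { apply potential_nonneg; eapply Forall_impl; [|exact Hw1]; exact range. }
  destruct (IH w1) as (e1 & r & He1 & Hr & Hlr & Hlen_er & Hsum_er);
    [unfold ltof; lia | exact Hw1 |].
  exists (e0 ++ e1), r; repeat split; auto.
  - now apply Forall_app.
  - rewrite length_app; lia.
  - rewrite (lsum_perm _ _ Hsplit), !lsum_app; lia.
Qed.

Lemma sumset_reduce n x : (2 * (b * b) <= n)%nat -> In m a -> In M a ->
  sumset n (setOf a) x ->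
  msum (sumset (n - 2 * (b * b)) (setOf [m; M])) (sumset (2 * (b * b)) (setOf a)) x.
Proof.
  intros Hn Hm HM (s & Hlen & Hs & <-).
  destruct (reduce_to_extremes s Hs) as (e & r & He & Hr & Hlr & Hlen_er & Hsum).
  set (k := (n - 2 * (b * b))%nat).
  assert (Hlen_e : length (firstn k e) = k) by (rewrite length_firstn; lia).
  rewrite <- (firstn_skipn k e) in He, Hsum; rewrite lsum_app in Hsum.
  apply Forall_app in He as [He1 He2].
  exists (lsum (firstn k e)), (lsum (skipn k e ++ r)); split; [|split].
  - exists (firstn k e); repeat split; auto.
    eapply Forall_impl; [|exact He1]; intros y [-> | ->]; cbn; auto.
  - exists (skipn k e ++ r); repeat split.
    + rewrite length_app, length_skipn; lia.
    + apply Forall_app; split; [|exact Hr].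
      eapply Forall_impl; [|exact He2]; now intros y [-> | ->].
  - change (fold_right Z.add 0 s) with (lsum s); rewrite lsum_app; lia.
Qed.

End Reduction.

Lemma msum_sumset_incl (X Y : Z -> Prop) p q x : (forall y, X y -> Y y) ->
  msum (sumset p X) (sumset q Y) x -> sumset (p + q) Y x.
Proof.
  intros HXY (y & z & (s1 & Hl1 & Hs1 & <-) & (s2 & Hl2 & Hs2 & <-) & ->).
  exists (s1 ++ s2); repeat split.
  - now rewrite length_app, Hl1, Hl2.
  - apply Forall_app; split; [eapply Forall_impl; eauto | exact Hs2].
  - apply lsum_app.
Qed.

Section Gapped.

Variables (a : list Z) (b : Z).
Hypothesis gaps : forall i : nat, (S i < length a)%nat ->
  nth i a 0 < nth (S i) a 0 /\ nth (S i) a 0 - nth i a 0 <= b.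

Lemma gapped_nth_le i j : (i <= j < length a)%nat -> nth i a 0 <= nth j a 0.
Proof.
  intros [Hij Hj]; induction Hij as [|j Hij IH]; [lia|].
  specialize (gaps j Hj); specialize (IH ltac:(lia)); lia.
Qed.

Lemma gapped_range x : In x a -> nth 0 a 0 <= x <= nth (length a - 1) a 0.
Proof.
  intros (i & Hi & <-)%(In_nth _ _ 0); split; apply gapped_nth_le; lia.
Qed.

Lemma gapped_step_down x : In x a -> nth 0 a 0 < x -> exists g, 1 <= g <= b /\ In (x - g) a.
Proof.
  intros (i & Hi & <-)%(In_nth _ _ 0) Hx.
  destruct i as [|i]; [lia|].
  destruct (gaps i Hi); exists (nth (S i) a 0 - nth i a 0); split; [lia|].
  replace (_ - _) with (nth i a 0) by ring; apply nth_In; lia.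
Qed.

Lemma gapped_step_up x : In x a -> x < nth (length a - 1) a 0 ->
  exists h, 1 <= h <= b /\ In (x + h) a.
Proof.
  intros (i & Hi & <-)%(In_nth _ _ 0) Hx.
  assert (Hi' : (S i < length a)%nat).
  { destruct (Nat.eq_dec i (length a - 1)) as [->|]; [lia|lia]. }
  destruct (gaps i Hi'); exists (nth (S i) a 0 - nth i a 0); split; [lia|].
  replace (_ + _) with (nth (S i) a 0) by ring; apply nth_In; lia.
Qed.

End Gapped.

Theorem mainTheorem1 (b : Z) (a : list Z) (n : nat) :
  1 <= b ->
  (1 <= length a)%nat ->
  (forall i : nat, (S i < length a)%nat ->
     nth i a 0 < nth (S i) a 0 /\ nth (S i) a 0 - nth i a 0 <= b) ->
  Z.of_nat n > 2 * b ^ 2 ->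
  forall x : Z,
    sumset n (setOf a) x <->
    msum (sumset (n - Z.to_nat (2 * b ^ 2))
                 (setOf [nth 0 a 0; nth (length a - 1) a 0]))
         (sumset (Z.to_nat (2 * b ^ 2)) (setOf a)) x.
Proof.
  intros Hb Ha gaps Hn x.
  set (bn := Z.to_nat b).
  assert (Hbn : Z.of_nat bn = b) by (apply Z2Nat.id; lia).
  replace (Z.to_nat (2 * b ^ 2)) with (2 * (bn * bn))%nat by (rewrite <- Hbn, Z.pow_2_r; lia).
  assert (Hm : In (nth 0 a 0) a) by (apply nth_In; lia).
  assert (HM : In (nth (length a - 1) a 0) a) by (apply nth_In; lia).
  assert (Hn' : (2 * (bn * bn) < n)%nat) by (rewrite <- Hbn, Z.pow_2_r in Hn; lia).
  split.
  - apply sumset_reduce; auto; [lia | exact (gapped_range a b gaps) | rewrite Hbn .. | lia].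
    + exact (gapped_step_down a b gaps).
    + exact (gapped_step_up a b gaps).
  - intros Hsum.
    replace n with (n - 2 * (bn * bn) + 2 * (bn * bn))%nat by lia.
    apply msum_sumset_incl with (2 := Hsum).
    now intros y [<- | [<- | []]].
Qed.
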